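(* Let $x_i,y_i\in\mathbb{Z}$ ($1\le i\le N$) with $x_i\le x_{i+1}$ and $y_i\le y_{i+1}$ for all $i$. For $\sigma\in\mathbb{S}_N$ define the Laurent monomial $$h_\sigma(\xi_1,\dots,\xi_N)=\prod_{(b,a)}\frac{\xi_a}{\xi_b}\prod_{i=1}^N\xi_{\sigma(i)}^{\,x_i-y_{\sigma(i)}-1},$$ the first product over all inversions $(b,a)$ of $\sigma$, and for $\gamma\in\{1,\dots,N\}$ let $h^\gamma_\sigma$ be the function of $\eta$ and $\xi_\delta$ ($\delta\ne\gamma$) obtained by substituting $\xi_\gamma=\eta/\prod_{\delta\ne\gamma}\xi_\delta$ into $h_\sigma$. (i) If $\sigma,\sigma'\in\mathbb{S}_N$ differ only by an interchange of two adjacent entries $\alpha$ and $\beta$, and $\gamma\ne\alpha,\beta$, then $h^\gamma_\sigma|_{\xi_\alpha=\xi_\beta}=h^\gamma_{\sigma'}|_{\xi_\alpha=\xi_\beta}$. (ii) If moreover $\gamma$ appears to the left of $\alpha$ and $\beta$ and $\gamma>\alpha,\beta$, then the exponents of $\xi_\alpha$ and of $\xi_\beta$ in $h^\gamma_\sigma$ and in $h^\gamma_{\sigma'}$ are greater than or equal to $2$.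
   Context: Permutations are in one-line notation $\sigma(1)\cdots\sigma(N)$; an inversion $(b,a)$ of $\sigma$ is a pair of entries with $b>a$ and $b$ appearing to the left of $a$ in $\sigma$. *)

(* Laurent monomials are represented by their integer
   exponent vectors. Indices 1..N of the paper are 'I_N (0-based). *)
From mathcomp Require Import all_boot all_order all_algebra all_fingroup.
Set Implicit Arguments. Unset Strict Implicit. Unset Printing Implicit Defensive.
Import Order.TTheory GRing.Theory Num.Theory.
Local Open Scope ring_scope.

(* exponent of xi_c in h_sigma:
   inversions (b,a) = (sigma i, sigma j) with i < j, sigma i > sigma j,
   each contributing xi_a / xi_b; plus the factor
   prod_i xi_{sigma i}^(x_i - y_{sigma i} - 1), whose xi_c exponent is
   x_{sigma^-1 c} - y_c - 1. *)
Definition hexp (N : nat) (x y : 'I_N -> int) (s : 'S_N) (c : 'I_N) : int :=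
  (\sum_(i < N) \sum_(j < N | (i < j)%N && (s j < s i)%N)
      (((c == s j)%:Z) - ((c == s i)%:Z)))
  + (x ((s^-1)%g c) - y c - 1).

(* h^gamma_sigma : Laurent monomial in the variables eta (= None) and
   xi_delta (= Some delta, delta != gamma), obtained from h_sigma by
   xi_gamma := eta / prod_{delta != gamma} xi_delta. *)
Definition hgam (N : nat) (x y : 'I_N -> int) (s : 'S_N) (g : 'I_N)
  : {ffun option 'I_N -> int} :=
  [ffun v => match v with
             | None => hexp x y s g
             | Some d => if d == g then 0 else hexp x y s d - hexp x y s g
             end].

(* Specialization xi_alpha = xi_beta of a Laurent monomial in eta, xi's:
   xi_beta disappears and its exponent is added to that of xi_alpha. *)
Definition spec_eq (N : nat) (a b : 'I_N) (m : {ffun option 'I_N -> int})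
  : {ffun option 'I_N -> int} :=
  [ffun v => match v with
             | None => m None
             | Some d => if d == b then 0
                         else if d == a then m (Some a) + m (Some b)
                         else m (Some d)
             end].

From mathcomp Require Import all_boot all_order all_algebra all_fingroup zify.
Import Order.TTheory GRing.Theory Num.Theory.
Set Implicit Arguments. Unset Strict Implicit. Unset Printing Implicit Defensive.
Local Open Scope ring_scope.

(* The exponent of xi_c in h_sigma is x_(sigma^-1 c) - y_c - 1 plus [inv_exp]:
   the number of larger entries left of c minus the number of smaller entries
   right of c.  Swapping two adjacent entries alpha, beta leaves every other
   exponent unchanged and preserves the sum of the exponents of xi_alpha and
   xi_beta, which is all that survives xi_alpha = xi_beta; the substitution
   for xi_gamma only subtracts the (unchanged) exponent of xi_gamma.  If gamma
   stands left of a smaller entry c, the inversion (gamma, c) adds 1 to the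
   exponent of xi_c and subtracts 1 from that of xi_gamma, every other
   position contributes nonnegatively to their difference, and monotonicity
   of x and y makes the remaining terms nonnegative too: hence the exponent
   of xi_c in h^gamma_sigma is at least 2. *)

Lemma sum_perm_eq_indicator N (t : 'S_N) (P : pred 'I_N) c :
  \sum_(j < N | P j) ((c == t j) : nat)%:Z = (P ((t^-1)%g c) : nat)%:Z.
Proof.
rewrite big_mkcond (bigD1 ((t^-1)%g c)) //= permKV eqxx big1 ?addr0.
  by case: (P _).
move=> j hj; case: (P j) => //; case: eqP => // e.
by move: hj; rewrite e permK eqxx.
Qed.

Definition inv_exp N (t : 'S_N) (c : 'I_N) : int :=
  \sum_(i < N) ((((i < (t^-1)%g c)%N && (c < t i)%N) : nat)%:Z
                - ((((t^-1)%g c < i)%N && (t i < c)%N) : nat)%:Z).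

Lemma inv_expE N (t : 'S_N) c :
  \sum_(i < N) \sum_(j < N | (i < j)%N && (t j < t i)%N)
      (((c == t j) : nat)%:Z - ((c == t i) : nat)%:Z) = inv_exp t c.
Proof.
under eq_bigr do rewrite sumrB.
rewrite /inv_exp !sumrB; congr (_ - _).
  by apply: eq_bigr => i _; rewrite sum_perm_eq_indicator permKV.
rewrite (exchange_big_dep predT) //=; apply: eq_bigr => j _.
by rewrite sum_perm_eq_indicator permKV.
Qed.

Lemma hexpE N (x y : 'I_N -> int) (t : 'S_N) c :
  hexp x y t c = inv_exp t c + (x ((t^-1)%g c) - y c - 1).
Proof. by rewrite /hexp inv_expE. Qed.

Lemma ler_bool_sub (a b c d : bool) : (c -> a) -> (b -> d) ->
  (c : nat)%:Z - (d : nat)%:Z <= (a : nat)%:Z - (b : nat)%:Z.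
Proof. by move=> /implyP ca /implyP bd; case: a b c d ca bd => [] [] [] []. Qed.

Lemma inv_exp_gap N (t : 'S_N) c g :
  ((t^-1)%g g < (t^-1)%g c)%N -> (c < g)%N -> 2 <= inv_exp t c - inv_exp t g.
Proof.
move=> lt_pos lt_val; rewrite /inv_exp -sumrB.
have npos : (t^-1)%g c != (t^-1)%g g by rewrite neq_ltn lt_pos orbT.
rewrite (bigD1 ((t^-1)%g g)) //= (bigD1 ((t^-1)%g c)) /=; last by rewrite npos.
rewrite !permKV lt_pos lt_val ltnNge (ltnW lt_pos) !ltnn /=.
set rest := \sum_(_ < _ | _) _.
suff : 0 <= rest by lia.
apply: sumr_ge0 => i _; rewrite subr_ge0; apply: ler_bool_sub => /andP [hi hti].
  by rewrite (ltn_trans hi lt_pos) (ltn_trans lt_val hti).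
by rewrite (ltn_trans lt_pos hi) (ltn_trans hti lt_val).
Qed.

Lemma hexp_gap N (x y : 'I_N -> int)
  (hx : forall i j : 'I_N, (i <= j)%N -> x i <= x j)
  (hy : forall i j : 'I_N, (i <= j)%N -> y i <= y j) (t : 'S_N) c g :
  ((t^-1)%g g < (t^-1)%g c)%N -> (c < g)%N -> 2 <= hexp x y t c - hexp x y t g.
Proof.
move=> lt_pos lt_val; rewrite !hexpE.
have := inv_exp_gap lt_pos lt_val; have := hx _ _ (ltnW lt_pos).
have := hy _ _ (ltnW lt_val); lia.
Qed.

Lemma ltn_adj N (p q i : 'I_N) : val q = (val p).+1 -> i != p -> i != q ->
  ((i < q)%N = (i < p)%N) * ((q < i)%N = (p < i)%N).
Proof. by rewrite -!val_eqE /= => hpq ip iq; split; lia. Qed.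

Section AdjacentSwap.

Variables (N : nat) (s s' : 'S_N) (p q : 'I_N).
Hypothesis hpq : val q = (val p).+1.
Hypothesis hs' : forall i, s' i = s (tperm p q i).

Lemma permV_adj_swap c : (s'^-1)%g c = tperm p q ((s^-1)%g c).
Proof. by apply: (@perm_inj _ s'); rewrite permKV hs' tpermK permKV. Qed.

Lemma inv_exp_adj_swap c : inv_exp s' c =
  \sum_(i < N) ((((tperm p q i < tperm p q ((s^-1)%g c))%N && (c < s i)%N) : nat)%:Z
              - (((tperm p q ((s^-1)%g c) < tperm p q i)%N && (s i < c)%N) : nat)%:Z).
Proof.
rewrite /inv_exp permV_adj_swap (reindex_inj (@perm_inj _ (tperm p q))) /=.
by apply: eq_bigr => i _; rewrite hs' tpermK.
Qed.

Lemma inv_exp_adj_swap_other c :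
  (s^-1)%g c != p -> (s^-1)%g c != q -> inv_exp s' c = inv_exp s c.
Proof.
move=> cp cq; rewrite inv_exp_adj_swap tpermD 1?eq_sym //; apply: eq_bigr => i _.
by case: tpermP => [->|->|//]; rewrite ?(ltn_adj hpq cp cq).
Qed.

Lemma inv_exp_adj_swap_sum :
  inv_exp s' (s p) + inv_exp s' (s q) = inv_exp s (s p) + inv_exp s (s q).
Proof.
have qp : q != p by rewrite -val_eqE /= hpq neq_ltn ltnSn orbT.
have [lt_pq lt_qp] : (p < q)%N /\ (q < p)%N = false by rewrite /= hpq ltnSn ltnNge leqnSn.
rewrite !inv_exp_adj_swap /inv_exp !permK tpermL tpermR -!big_split /=.
rewrite (bigD1 p) // [RHS](bigD1 p) // (bigD1 q) ?qp // [in RHS](bigD1 q) ?qp //=.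
rewrite !tpermL !tpermR !ltnn lt_pq lt_qp /= !addrA; congr (_ + _).
  by case: (s p < s q)%N; case: (s q < s p)%N.
apply: eq_bigr => i /andP [ip iq].
by rewrite tpermD 1?eq_sym // !(ltn_adj hpq ip iq).
Qed.

Variables x y : 'I_N -> int.

Lemma hexp_adj_swap_other c :
  c != s p -> c != s q -> hexp x y s' c = hexp x y s c.
Proof.
move=> cp cq.
have pos_p : (s^-1)%g c != p by apply: contra cp => /eqP <-; rewrite permKV.
have pos_q : (s^-1)%g c != q by apply: contra cq => /eqP <-; rewrite permKV.
by rewrite !hexpE inv_exp_adj_swap_other // permV_adj_swap tpermD 1?eq_sym.
Qed.

Lemma hexp_adj_swap_sum :
  hexp x y s' (s p) + hexp x y s' (s q) = hexp x y s (s p) + hexp x y s (s q).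
Proof.
rewrite !hexpE !permV_adj_swap !permK tpermL tpermR.
have := inv_exp_adj_swap_sum; lia.
Qed.

End AdjacentSwap.

Lemma hgam_gap N (x y : 'I_N -> int)
  (hx : forall i j : 'I_N, (i <= j)%N -> x i <= x j)
  (hy : forall i j : 'I_N, (i <= j)%N -> y i <= y j) (t : 'S_N) c g :
  ((t^-1)%g g < (t^-1)%g c)%N -> (c < g)%N -> 2 <= hgam x y t g (Some c).
Proof.
move=> lt_pos lt_val; rewrite ffunE /= ifN; first exact: hexp_gap.
by rewrite neq_ltn lt_val.
Qed.

Lemma spec_eq_hgam N (x y : 'I_N -> int) (s s' : 'S_N) (a b g : 'I_N) :
  g != a -> g != b ->
  (forall c, c != a -> c != b -> hexp x y s' c = hexp x y s c) ->
  hexp x y s' a + hexp x y s' b = hexp x y s a + hexp x y s b ->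
  spec_eq a b (hgam x y s g) = spec_eq a b (hgam x y s' g).
Proof.
move=> ga gb other sum_ab; have other_g := other g ga gb.
apply/ffunP => -[d|]; rewrite !ffunE /= ?other_g //.
case: ifP => // db; case: ifP => [_|da].
  by rewrite ![_ == g]eq_sym (negbTE ga) (negbTE gb); lia.
by case: ifP => // _; rewrite other ?da ?db.
Qed.

Theorem lemma3p6 (N : nat) (x y : 'I_N -> int)
  (hx : forall i j : 'I_N, (i <= j)%N -> x i <= x j)
  (hy : forall i j : 'I_N, (i <= j)%N -> y i <= y j)
  (s s' : 'S_N) (p q : 'I_N) (hpq : val q = (val p).+1)
  (hs' : forall i : 'I_N, s' i = s (tperm p q i))
  (al be ga : 'I_N) (hal : s p = al) (hbe : s q = be)
  (hga_a : ga != al) (hga_b : ga != be) :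
  spec_eq al be (hgam x y s ga) = spec_eq al be (hgam x y s' ga) /\
  (((val ((s^-1)%g ga) < val p)%N /\ (val al < val ga)%N /\ (val be < val ga)%N) ->
     [/\ 2 <= hgam x y s ga (Some al), 2 <= hgam x y s ga (Some be),
         2 <= hgam x y s' ga (Some al) & 2 <= hgam x y s' ga (Some be)]).
Proof.
subst al be; split.
  apply: spec_eq_hgam => //; first exact: hexp_adj_swap_other.
  exact: hexp_adj_swap_sum.
move=> [lt_gp [lt_pg lt_qg]].
have lt_pq : (p < q)%N by rewrite /= hpq.
have lt_gq := ltn_trans lt_gp lt_pq.
have pos_g : (s'^-1)%g ga = (s^-1)%g ga.
  by rewrite (permV_adj_swap hs') tpermD // neq_ltn ?lt_gp ?lt_gq ?orbT.
have [pos_p pos_q] : (s^-1)%g (s p) = p /\ (s^-1)%g (s q) = q by rewrite !permK.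
have [pos'_p pos'_q] : (s'^-1)%g (s p) = q /\ (s'^-1)%g (s q) = p.
  by rewrite !(permV_adj_swap hs') pos_p pos_q tpermL tpermR.
by split; apply: hgam_gap; rewrite ?pos_g ?pos_p ?pos_q ?pos'_p ?pos'_q.
Qed.
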